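(* Let $G=(V,E)$ be a graph with a string representation $\varphi$, let $D\subseteq V$, suppose the robber is confined to $D$, and let $\pi$ be a shortest curve relative to $D$ in $\varphi$. Then five cops can prevent the robber from entering any vertex whose string intersects $\pi$, after a finite number of initial moves.
   Context: A string representation of $G$ assigns to each vertex $v$ a bounded curve $\varphi(v)\subseteq\mathbb{R}^2$ (continuous image of $[0,1]$) so that distinct $u,v$ are adjacent iff $\varphi(u)\cap\varphi(v)\ne\emptyset$. A path $P$ in $G$ is a shortest path relative to $D$ if it is a shortest path (between its endpoints) in $G[P\cup D]$. If $P$ is a shortest path relative to $D$ from $u$ to $v$, and $A\in\varphi(u)$, $B\in\varphi(v)$ are points, a curve $\pi\subseteq\bigcup_{p\in P}\varphi(p)$ from $A$ to $B$ such that for every $p\in P$ the set $\pi\cap\varphi(p)$ is connected, and these intersections appear along $\pi$ in the same order as the vertices of $P$, is a shortest curve of $P$ relative to $D$; a shortest curve relative to $D$ is a shortest curve of some shortest path relative to $D$. Game of cops and robber: cops are placed, then the robber; players alternate starting with cops; each piece stays or moves to an adjacent vertex; capture happens when a cop occupies the robber's vertex. The robber is confined to $D$ if the cops' strategy ensures he is immediately captured upon moving to any vertex outside $D$. *)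

From HB Require Import structures.
From mathcomp Require Import all_boot all_order all_algebra.
From mathcomp Require Import classical_sets boolp reals topology normedtype set_interval.
Set Implicit Arguments. Unset Strict Implicit. Unset Printing Implicit Defensive.
Import Order.TTheory GRing.Theory Num.Theory numFieldNormedType.Exports.
Local Open Scope classical_set_scope.
Local Open Scope ring_scope.

Definition curve_param {R : realType} (f : R -> R * R) (S : set (R * R)) : Prop :=
  {within `[(0:R), 1]%classic, continuous f} /\ f @` `[(0:R), 1]%classic = S.

Definition is_curve {R : realType} (S : set (R * R)) : Prop :=
  exists f, curve_param f S.

(* phi is a string representation (of the graph it induces):
   every phi v is a curve. *)
Definition string_rep {R : realType} {V : finType} (phi : V -> set (R * R)) : Prop :=
  forall v, is_curve (phi v).

Definition sadj {R : realType} {V : finType} (phi : V -> set (R * R)) (u v : V) : Prop :=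
  u <> v /\ (phi u `&` phi v) !=set0.

Definition walk_in {R : realType} {V : finType} (phi : V -> set (R * R))
    (S : set V) (q : seq V) : Prop :=
  q <> [::] /\ (forall x, x \in q -> S x) /\
  (forall x y, (x, y) \in zip q (behead q) -> sadj phi x y).

Definition shortest_path_rel {R : realType} {V : finType} (phi : V -> set (R * R))
    (D : set V) (P : seq V) (u v : V) : Prop :=
  let S := (fun x => x \in P \/ D x) in
  walk_in phi S P /\ head u P = u /\ last u P = v /\
  (forall q, walk_in phi S q -> head u q = u -> last u q = v ->
     (size P <= size q)%N).

(* pi is a shortest curve of P relative to D (P a shortest path relative to D
   from u to v): a curve from A in phi u to B in phi v, contained in the union
   of the strings of P, meeting each string of P in a connected set, these
   intersections appearing along pi in the order of P. *)
Definition shortest_curve_of {R : realType} {V : finType} (phi : V -> set (R * R))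
    (D : set V) (P : seq V) (pi : set (R * R)) : Prop :=
  exists u v, shortest_path_rel phi D P u v /\
  exists f : R -> R * R,
    curve_param f pi /\ phi u (f 0) /\ phi v (f 1) /\
    (forall x, pi x -> exists p, p \in P /\ phi p x) /\
    (forall p, p \in P -> connected (pi `&` phi p)) /\
    (forall (i j : nat), (i < j)%N -> (j < size P)%N ->
       forall s t, s \in `[0, 1] -> t \in `[0, 1] ->
       phi (nth u P i) (f s) -> ~ phi (nth u P j) (f s) ->
       phi (nth u P j) (f t) -> ~ phi (nth u P i) (f t) -> s < t).

Definition shortest_curve_rel {R : realType} {V : finType} (phi : V -> set (R * R))
    (D : set V) (pi : set (R * R)) : Prop :=
  exists P, shortest_curve_of phi D P pi.

(* A robber walk confined to D: positions r 0, r 1, ... (r t is the robber's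
   position after his t-th move, r 0 his placement); he always stays in D
   (being confined to D) and each move stays put or goes to an adjacent vertex. *)
Definition robber_walk {R : realType} {V : finType} (phi : V -> set (R * R))
    (D : set V) (r : nat -> V) : Prop :=
  forall t, D (r t) /\ (r t.+1 = r t \/ sadj phi (r t) (r t.+1)).

(* A strategy of k cops: initial placement c0, and a function giving the
   cops' positions after seeing the robber's history [r 0; ...; r (t-1)].
   cop_pos c0 sigma r t = positions of the cops at time t, i.e. before the
   robber's t-th position is answered: time 0 = placement; time t+1 = after
   the cops answered r t. *)
Definition cop_pos {V : finType} {k : nat} (c0 : 'I_k -> V)
    (sigma : seq V -> 'I_k -> V) (r : nat -> V) (t : nat) : 'I_k -> V :=
  if t is _.+1 then sigma (mkseq r t) else c0.

Definition legal_cops {R : realType} {V : finType} (phi : V -> set (R * R))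
    (D : set V) {k : nat} (c0 : 'I_k -> V) (sigma : seq V -> 'I_k -> V) : Prop :=
  forall r, robber_walk phi D r -> forall t (i : 'I_k),
    cop_pos c0 sigma r t.+1 i = cop_pos c0 sigma r t i \/
    sadj phi (cop_pos c0 sigma r t i) (cop_pos c0 sigma r t.+1 i).

(* k cops can prevent the confined robber from entering any vertex of W after
   finitely many initial moves: there is a legal strategy such that for every
   robber walk (in D) there is a time T after which, whenever the robber is at
   a vertex of W, he is captured by the cops' next move. *)
Definition cops_guard {R : realType} {V : finType} (phi : V -> set (R * R))
    (D : set V) (k : nat) (W : set V) : Prop :=
  exists (c0 : 'I_k -> V) (sigma : seq V -> 'I_k -> V),
    legal_cops phi D c0 sigma /\
    forall r, robber_walk phi D r -> exists T : nat, forall t : nat, (T <= t)%N ->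
      W (r t) -> exists i : 'I_k, cop_pos c0 sigma r t.+1 i = r t.

From HB Require Import structures.
From mathcomp Require Import all_boot all_order all_algebra.
From mathcomp Require Import classical_sets boolp reals topology normedtype set_interval.
From mathcomp Require Import zify.
Local Open Scope classical_set_scope.

Set Implicit Arguments. Unset Strict Implicit. Unset Printing Implicit Defensive.

(** Let [P = p_0 ... p_len] be a shortest path relative to [D] and let the
  level of a vertex be its distance from [p_0] in [G[P ∪ D]], capped at [len].
  Since [P] is shortest, [p_i] has level [i]; levels change by at most one along
  edges of [G[P ∪ D]], hence along the walk of the robber.  Five cops stand on
  [p_(b-2), ..., p_(b+2)] and move [b] one step towards the robber's level each
  round; the cursor [b] catches up with the level after at most [len] rounds and
  follows it from then on.  A vertex [x] of the robber touching some [p_i] then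
  satisfies [|i - b| <= 2], so a cop stands on or next to [x] and captures the
  robber.  Finally, every string meeting [pi] meets a string of [P], since [pi]
  lies in their union. *)

Definition step_toward (b c : nat) : nat :=
  if (b < c)%N then b.+1 else if (c < b)%N then b.-1 else b.

Lemma step_toward_near b c :
  (step_toward b c <= b.+1)%N /\ (b <= (step_toward b c).+1)%N.
Proof. by rewrite /step_toward; case: (ltnP b c); case: (ltnP c b) => /=; lia. Qed.

Section Chase.
Variables (target chaser : nat -> nat) (L : nat).
Hypothesis target_le : forall t, (target t <= L)%N.
Hypothesis target_lipschitz : forall t,
  (target t.+1 <= (target t).+1)%N /\ (target t <= (target t.+1).+1)%N.
Hypothesis chaser0 : chaser 0 = 0.
Hypothesis chaserS : forall t, chaser t.+1 = step_toward (chaser t) (target t).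

Lemma chaser_progress t :
  chaser t.+1 = target t \/ (t < chaser t.+1 < target t)%N.
Proof.
elim: t => [|t IH]; rewrite chaserS /step_toward.
  by rewrite chaser0; case: (ltnP 0 (target 0)) => /=; lia.
have := target_lipschitz t.
case: (ltnP (chaser t.+1) (target t.+1));
  case: (ltnP (target t.+1) (chaser t.+1)) => /=; lia.
Qed.

Lemma chaser_catches t : (L <= t)%N -> chaser t.+1 = target t.
Proof. by move=> Lt; have := target_le t; case: (chaser_progress t) => //; lia. Qed.

End Chase.

Section Touch.
Variables (R : realType) (V : finType) (phi : V -> set (R * R)).

Definition touches (x y : V) : Prop := x = y \/ sadj phi x y.

Lemma sadj_sym x y : sadj phi x y -> sadj phi y x.
Proof. by move=> [xy meet]; split; [move=> yx; apply: xy | rewrite setIC]. Qed.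

Lemma robber_walk_touches D r t : robber_walk phi D r -> touches (r t) (r t.+1).
Proof. by move=> /(_ t) [_ [->|]]; [left | right]. Qed.

Definition sadjb : rel V := fun x y => `[< sadj phi x y >].

Lemma walk_inE (S : set V) a q :
  walk_in phi S (a :: q) <-> (forall x, x \in a :: q -> S x) /\ path sadjb a q.
Proof.
have zipE b s : (forall x y, (x, y) \in zip (b :: s) s -> sadj phi x y) <->
    path sadjb b s.
  elim: s b => [|c s IH] b /=; first by split.
  split=> [adj | /andP[/asboolP bc cs] x y].
    apply/andP; split; first by apply/asboolP; apply: adj; rewrite inE eqxx.
    by apply/IH => x y xy; apply: adj; rewrite inE xy orbT.
  by rewrite inE => /orP[/eqP[-> ->] // | ]; move/IH: cs; apply.
rewrite /walk_in -zipE; split; first by case=> _.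
by move=> [inS adj]; split.
Qed.

End Touch.

Lemma last_take_nth (T : Type) (x : T) s i : (i <= size s)%N ->
  last x (take i s) = nth x (x :: s) i.
Proof. by elim: s x i => [|y s IH] x [|i] //= ?; rewrite IH // (set_nth_default x). Qed.

Section ShortestPath.
Variables (R : realType) (V : finType) (phi : V -> set (R * R)) (D : set V).
Variables (P : seq V) (u v : V).
Hypothesis P_shortest : shortest_path_rel phi D P u v.

Let S : set V := fun x => x \in P \/ D x.

Definition len := (size P).-1.

Definition path_nbhd : set V := [set x | exists2 q, q \in P & touches phi q x].

Definition reachable (x : V) (n : nat) : Prop := exists q,
  [/\ walk_in phi S q, head u q = u, last u q = x & size q = n.+1].

Lemma P_cons_path : exists2 P', P = u :: P' & path (sadjb phi) u P'.
Proof.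
case: P_shortest => + [+ _]; case: P => [[] // | a P' /walk_inE[_ P'path] /= au].
by subst a; exists P'.
Qed.

Lemma P_adj i : (i < len)%N -> sadj phi (nth u P i) (nth u P i.+1).
Proof.
case: P_cons_path => P' EP /(pathP u) P'path; rewrite /len EP /= => ilen.
exact/asboolP/P'path.
Qed.

Lemma reachable_step x y n :
  reachable x n -> S y -> sadj phi x y -> reachable y n.+1.
Proof.
move=> [[|a q] [wq]]; first by case: wq.
move: wq => /walk_inE[qS qpath] /= au qx [sq] Sy xy.
exists (a :: rcons q y); split; rewrite /= ?last_rcons ?size_rcons ?sq //.
apply/walk_inE; split.
  by move=> z; rewrite -rcons_cons mem_rcons inE => /orP[/eqP -> | /qS].
by rewrite rcons_path qpath /= qx; apply/asboolP.
Qed.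

Lemma reachable_nth i : (i <= len)%N -> reachable (nth u P i) i.
Proof.
case: P_cons_path => P' EP P'path; rewrite /len EP /= => ilen.
exists (u :: take i P'); split; rewrite /= ?last_take_nth ?size_takel //.
apply/walk_inE; split.
  move=> z zP'; left; move: zP'; rewrite EP !inE => /orP[-> // | /mem_take ->].
  exact: orbT.
by move: P'path; rewrite -{1}(cat_take_drop i P') cat_path => /andP[].
Qed.

(* Splicing such a walk with [p_i, ..., p_len] gives a walk from [u] to [v]. *)
Lemma reachable_nth_ge i n : (i <= len)%N -> reachable (nth u P i) n -> (i <= n)%N.
Proof.
case: P_cons_path => P' EP P'path; rewrite /len EP /= => ilen.
move=> [[|a q] [wq]]; first by case: wq.
move: wq => /walk_inE[qS qpath] /= au qx [sq]; subst a.
case: P_shortest => _ [_ [Pv minimal]]; rewrite EP in Pv.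
suff: (size P <= (n + (size P' - i)).+1)%N by rewrite EP /=; lia.
rewrite -sq -size_drop -size_cat.
have join : last u q = last u (take i P') by rewrite last_take_nth.
apply: (minimal (u :: (q ++ drop i P'))) => //; last first.
  by rewrite /= last_cat join -last_cat cat_take_drop.
apply/walk_inE; split.
  move=> z; rewrite -cat_cons mem_cat => /orP[/qS // | /mem_drop zP].
  by left; rewrite EP inE zP orbT.
rewrite cat_path qpath join /=.
by move: P'path; rewrite -{1}(cat_take_drop i P') cat_path => /andP[].
Qed.

Definition level_pred (x : V) : pred nat :=
  fun n => (n == len) || `[< reachable x n >].

Lemma level_pred_len x : exists n, level_pred x n.
Proof. by exists len; rewrite /level_pred eqxx. Qed.

Definition level (x : V) : nat := ex_minn (level_pred_len x).

Lemma level_min x n : level_pred x n -> (level x <= n)%N.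
Proof. by rewrite /level; case: ex_minnP => m _; apply. Qed.

Lemma level_le x : (level x <= len)%N.
Proof. by apply: level_min; rewrite /level_pred eqxx. Qed.

Lemma level_spec x : level x = len \/ reachable x (level x).
Proof.
by rewrite /level; case: ex_minnP => m /orP[/eqP|/asboolP] ? _; [left | right].
Qed.

Lemma level_nth i : (i <= len)%N -> level (nth u P i) = i.
Proof.
move=> ilen; apply/eqP; rewrite eqn_leq; apply/andP; split.
  by apply: level_min; apply/orP; right; apply/asboolP; apply: reachable_nth.
by case: (level_spec (nth u P i)) => [-> // | /reachable_nth_ge]; apply.
Qed.

Lemma level_sadj x y : S y -> sadj phi x y -> (level y <= (level x).+1)%N.
Proof.
move=> Sy xy; case: (level_spec x) => [-> | reach_x].
  exact: leq_trans (level_le y) _.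
by apply: level_min; apply/orP; right; apply/asboolP; apply: reachable_step reach_x Sy xy.
Qed.

Lemma level_touches x y : S x -> S y -> touches phi x y ->
  (level y <= (level x).+1)%N /\ (level x <= (level y).+1)%N.
Proof.
move=> Sx Sy [-> // | xy].
by split; apply: level_sadj => //; apply: sadj_sym.
Qed.

Definition formation (b : nat) (m : 'I_5) : V := nth u P (minn (b + m - 2) len).

Lemma formation_move b b' m : (b' <= b.+1)%N -> (b <= b'.+1)%N ->
  formation b' m = formation b m \/ sadj phi (formation b m) (formation b' m).
Proof.
move=> b'b bb'; rewrite /formation.
set j := minn (b + m - 2) len; set j' := minn (b' + m - 2) len.
have : j' = j \/ j' = j.+1 /\ (j < len)%N \/ j = j'.+1 /\ (j' < len)%N.
  by rewrite /j /j'; lia.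
case=> [-> | [[-> ?] | [-> ?]]]; [by left | by right; apply: P_adj |].
by right; apply/sadj_sym/P_adj.
Qed.

Lemma formation_guards x y : D x -> D y -> touches phi y x -> path_nbhd x ->
  exists m, touches phi (formation (level y) m) x.
Proof.
move=> Dx Dy yx [q qP qx].
pose i := index q P.
have ilen : (i <= len)%N by have := index_mem q P; rewrite qP /len; case: (size P).
have [? ?] : (level x <= i.+1)%N /\ (i <= (level x).+1)%N.
  by rewrite -(level_nth ilen) nth_index //; apply: level_touches qx; [left | right].
have [? ?] := level_touches (or_intror Dy) (or_intror Dx) yx.
have := level_le y; have lt5 : (i + 2 - level y < 5)%N by lia.
exists (Ordinal lt5); rewrite /formation /=.
have -> : minn (level y + (i + 2 - level y) - 2) len = i by lia.
by rewrite nth_index.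
Qed.

Definition can_capture (s : 'I_5 -> V) (x : V) : pred 'I_5 :=
  fun j => `[< touches phi (s j) x >].

Definition cop_update (s : ('I_5 -> V) * nat) (x : V) : ('I_5 -> V) * nat :=
  let b := step_toward s.2 (level x) in
  if [pick j | can_capture s.1 x j] is Some j then
    ((fun m => if m == j then x else s.1 m), b)
  else (formation b, b).

Definition cop_state (h : seq V) := foldl cop_update (formation 0, 0) h.

Definition cop_strategy (h : seq V) := (cop_state h).1.

Lemma cop_state_mkseqS (r : nat -> V) t :
  cop_state (mkseq r t.+1) = cop_update (cop_state (mkseq r t)) (r t).
Proof. by rewrite /cop_state mkseqS foldl_rcons. Qed.

Lemma cop_posE r t : cop_pos (formation 0) cop_strategy r t = (cop_state (mkseq r t)).1.
Proof. by case: t. Qed.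

Lemma cop_state_cursor r t :
  (cop_state (mkseq r t.+1)).2 = step_toward (cop_state (mkseq r t)).2 (level (r t)).
Proof. by rewrite cop_state_mkseqS /cop_update; case: pickP. Qed.

Lemma cop_state_capture r t :
  (exists j, can_capture (cop_state (mkseq r t)).1 (r t) j) ->
  exists j, (cop_state (mkseq r t.+1)).1 j = r t.
Proof.
move=> [j capture]; rewrite cop_state_mkseqS /cop_update.
by case: pickP => [k _ | /(_ j)]; [exists k; rewrite /= eqxx | rewrite capture].
Qed.

Lemma cop_state_formation r t :
  (cop_state (mkseq r t.+1)).1 = formation (cop_state (mkseq r t.+1)).2 \/
  exists j, (cop_state (mkseq r t.+1)).1 j = r t.
Proof.
rewrite cop_state_mkseqS /cop_update.
by case: pickP => [j _ | _]; [right; exists j; rewrite /= eqxx | left].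
Qed.

Lemma cop_state_no_capture r t : robber_walk phi D r ->
  (forall j, ~~ can_capture (cop_state (mkseq r t)).1 (r t) j) ->
  (cop_state (mkseq r t)).1 = formation (cop_state (mkseq r t)).2.
Proof.
case: t => [// | t] walk free; case: (cop_state_formation r t) => [// | [j cop_j]].
have := free j; rewrite /can_capture cop_j.
by case: asboolP => // -[]; apply: robber_walk_touches.
Qed.

Lemma cop_strategy_legal : legal_cops phi D (formation 0) cop_strategy.
Proof.
move=> r walk t i; rewrite !cop_posE cop_state_mkseqS /cop_update.
set s := cop_state (mkseq r t).
case: pickP => [j /asboolP capture | free] /=.
  by case: (eqVneq i j) => [-> | _]; [case: capture => [->|]; [left | right] | left].
have -> : s.1 = formation s.2 by apply: cop_state_no_capture => // j; rewrite free.
by have [? ?] := step_toward_near s.2 (level (r t)); apply: formation_move.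
Qed.

Lemma cops_guard_path_nbhd : cops_guard phi D 5 path_nbhd.
Proof.
exists (formation 0), cop_strategy; split; first exact: cop_strategy_legal.
move=> r walk; have Dr t : D (r t) := (walk t).1.
have level_walk t : (level (r t.+1) <= (level (r t)).+1)%N /\
    (level (r t) <= (level (r t.+1)).+1)%N.
  by apply: level_touches (robber_walk_touches t walk); right.
have cursor_catches := chaser_catches (fun t => level_le (r t)) level_walk erefl
  (cop_state_cursor r).
exists len.+1 => -[// | t] tlen nbhd.
rewrite cop_posE; apply: cop_state_capture.
case: (cop_state_formation r t) => [-> | [j cop_j]].
  rewrite cursor_catches //.
  by case: (formation_guards (Dr t.+1) (Dr t) (robber_walk_touches t walk) nbhd) => m;
    exists m; apply/asboolP.
by exists j; apply/asboolP; rewrite cop_j; apply: robber_walk_touches.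
Qed.

End ShortestPath.

Lemma cops_guard_sub (R : realType) (V : finType) (phi : V -> set (R * R))
    (D : set V) k (W W' : set V) :
  W' `<=` W -> cops_guard phi D k W -> cops_guard phi D k W'.
Proof.
move=> W'W [c0 [sigma [legal guard]]]; exists c0, sigma; split => // r walk.
by have [T catch] := guard r walk; exists T => t Tt /W'W; apply: catch.
Qed.

Theorem corollary2 (R : realType) (V : finType) (phi : V -> set (R * R))
    (D : set V) (pi : set (R * R)) :
  string_rep phi ->
  shortest_curve_rel phi D pi ->
  cops_guard phi D 5 [set v | (phi v `&` pi) !=set0].
Proof.
move=> _ [P [u [v [P_shortest [f [_ [_ [_ [pi_cover _]]]]]]]]].
apply: cops_guard_sub (cops_guard_path_nbhd P_shortest).
move=> x [z [xz /pi_cover [q [qP qz]]]]; exists q => //.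
case: (pselect (q = x)) => [-> | qx]; [by left | right].
by split => //; exists z.
Qed.
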